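(* Let $\Lambda'$, $\Lambda\subset\Lambda'$ and $Z$ be as in the context. Suppose $V$ is a finitely generated $\Lambda'$-module on which $Z$ acts by a character $\omega_V$, and $\sigma$ is a simple $\Lambda'$-module such that $Z$ acts on $\sigma$ by $\omega_\sigma=\omega_V$. Then $V|_\Lambda$ is finitely generated, $\sigma|_\Lambda$ is simple, and $$[V:\sigma]=[V|_\Lambda:\sigma|_\Lambda],$$ where $[V:\sigma]$ denotes the multiplicity of $\sigma$ as a Jordan--Hölder factor of $V$ (and similarly over $\Lambda$).
   Context: Let $\mathbb{F}$ be a field of characteristic $p$, sufficiently large so that all simple modules considered are absolutely simple. $\Lambda'$ is an Artinian $\mathbb F$-algebra, $\Lambda\subset\Lambda'$ a subalgebra, and $Z$ a finite subgroup of the group of units of the center of $\Lambda'$, of order prime to $p$. Put $Y:=Z/(\Lambda\cap Z)$. It is assumed that $\Lambda'$ is a crossed product $\Lambda*Y$: there is a set $\widetilde Y=\{\widetilde y:y\in Y\}$ of units of $\Lambda'$ (the image of a set-theoretic section $Y\to Z$ sending $1$ to $1$) with $|\widetilde Y|=|Y|$, such that $\Lambda'$ is free as a left and as a right $\Lambda$-module with basis $\widetilde Y$, $\widetilde{1_Y}=1$, and for $y_1,y_2\in Y$, $\widetilde{y_1}\Lambda=\Lambda\widetilde{y_1}$ and $\widetilde{y_1}\widetilde{y_2}\Lambda=\widetilde{y_1y_2}\Lambda$. Modules are left modules. A simple $\Lambda'$-module has a central character on $Z$, denoted $\omega_\sigma$. *)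

From HB Require Import structures.
From mathcomp Require Import all_boot all_order all_algebra all_fingroup.
From mathcomp Require Import boolp.
Set Implicit Arguments. Unset Strict Implicit. Unset Printing Implicit Defensive.
Import GRing.Theory.
Local Open Scope ring_scope.

(* Modules are left modules over the F-algebra L (an [algType F]); a module
   over a subalgebra [A : {pred L}] is a module over L viewed through the
   restricted action of the elements of [A] (restriction of scalars).
   The whole algebra is obtained with [A := predT]. *)

Section Mods.
Variables (F : fieldType) (L : algType F).

Definition left_ideal (I : L -> Prop) : Prop :=
  [/\ I 0, (forall x y, I x -> I y -> I (x + y)) & (forall a x, I x -> I (a * x))].

Definition artinian : Prop :=
  forall I : nat -> L -> Prop, (forall n, left_ideal (I n)) ->
  (forall n x, I n.+1 x -> I n x) ->
  exists N, forall n, (N <= n)%N -> forall x, I n x <-> I N x.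

Definition subalgebra (A : {pred L}) : Prop :=
  [/\ 1 \in A, (forall x y, x \in A -> y \in A -> x + y \in A),
      (forall x y, x \in A -> y \in A -> x * y \in A)
    & (forall (c : F) x, x \in A -> c *: x \in A)].

Variable V : lmodType L.

Definition submod (A : {pred L}) (U : V -> Prop) : Prop :=
  [/\ U 0, (forall u w, U u -> U w -> U (u + w))
    & (forall a u, a \in A -> U u -> U (a *: u))].

Definition fin_gen (A : {pred L}) : Prop :=
  exists (n : nat) (g : 'I_n -> V), forall v : V,
    exists c : 'I_n -> L, (forall i, c i \in A) /\ v = \sum_(i < n) c i *: g i.

Definition simple_mod (A : {pred L}) : Prop :=
  (exists x : V, x != 0) /\
  forall U, submod A U -> (forall x, U x -> x = 0) \/ (forall x, U x).

Definition acts_by_char (Zt : finGroupType) (iota : Zt -> L) (omega : Zt -> F) :=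
  forall (z : Zt) (v : V), iota z *: v = (omega z)%:A *: v.

Definition comp_series (A : {pred L}) (n : nat) (W : nat -> V -> Prop) : Prop :=
  [/\ (forall v, W 0%N v <-> v = 0), (forall v, W n v),
      (forall i, (i <= n)%N -> submod A (W i))
    & forall i, (i < n)%N ->
      [/\ (forall v, W i v -> W i.+1 v), (exists v, W i.+1 v /\ ~ W i v)
        & forall U, submod A U -> (forall v, W i v -> U v) ->
            (forall v, U v -> W i.+1 v) ->
            (forall v, U v <-> W i v) \/ (forall v, U v <-> W i.+1 v)]].

(* The factor W (i+1) / W i is isomorphic, as an A-module, to S: there is an
   A-linear surjection W (i+1) -> S with kernel W i. *)
Definition factor_iso (A : {pred L}) (W : nat -> V -> Prop) (i : nat)
    (S : lmodType L) : Prop :=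
  exists f : V -> S,
    [/\ (forall u w, W i.+1 u -> W i.+1 w -> f (u + w) = f u + f w),
        (forall a u, a \in A -> W i.+1 u -> f (a *: u) = a *: f u),
        (forall x, exists u, W i.+1 u /\ f u = x)
      & (forall u, W i.+1 u -> (f u = 0 <-> W i u))].

Definition jh_count (A : {pred L}) (n : nat) (W : nat -> V -> Prop)
    (S : lmodType L) : nat :=
  #|[set i : 'I_n | `[< factor_iso A W i S >]]|.

End Mods.

(* iota : Zt -> L embeds the finite group Z as a subgroup of the units of the
   centre of L (units follows from being a monoid morphism from a group). *)
Definition central_subgroup (F : fieldType) (L : algType F) (Zt : finGroupType)
    (iota : Zt -> L) : Prop :=
  [/\ injective iota, iota 1%g = 1,
      (forall x y, iota (x * y)%g = iota x * iota y)
    & (forall z a, iota z * a = a * iota z)].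

Definition character (F : fieldType) (Zt : finGroupType) (omega : Zt -> F) :=
  omega 1%g = 1 /\ forall x y, omega (x * y)%g = omega x * omega y.

(* L = A * Y is a crossed product, Y = Z / (A \cap Z).  The section Y -> Z is
   encoded by its image T : a transversal of A \cap Z in Z containing 1;
   tilde y = iota t. *)
Definition crossed_product (F : fieldType) (L : algType F) (A : {pred L})
    (Zt : finGroupType) (iota : Zt -> L) (T : {set Zt}) : Prop :=
  [/\ 1%g \in T,
      (forall z : Zt, exists t, t \in T /\ iota (t^-1 * z)%g \in A)
    & (forall t1 t2, t1 \in T -> t2 \in T -> iota (t1^-1 * t2)%g \in A -> t1 = t2)] /\
  ((forall x : L, exists c : Zt -> L,
      (forall t, c t \in A) /\ x = \sum_(t in T) c t * iota t) /\
   (forall c : Zt -> L, (forall t, c t \in A) ->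
      \sum_(t in T) c t * iota t = 0 -> forall t, t \in T -> c t = 0)) /\
  ((forall x : L, exists c : Zt -> L,
      (forall t, c t \in A) /\ x = \sum_(t in T) iota t * c t) /\
   (forall c : Zt -> L, (forall t, c t \in A) ->
      \sum_(t in T) iota t * c t = 0 -> forall t, t \in T -> c t = 0)) /\
  (forall t a, t \in T -> a \in A -> exists b, b \in A /\ iota t * a = b * iota t) /\
  (forall t a, t \in T -> a \in A -> exists b, b \in A /\ a * iota t = iota t * b) /\
  (* tilde y1 tilde y2 A = tilde(y1 y2) A, where t3 represents the coset of t1 t2 *)
  (forall t1 t2 t3, t1 \in T -> t2 \in T -> t3 \in T ->
     iota (t3^-1 * (t1 * t2))%g \in A ->
     (forall a, a \in A -> exists b, b \in A /\ iota t1 * iota t2 * a = iota t3 * b) /\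
     (forall a, a \in A -> exists b, b \in A /\ iota t3 * a = iota t1 * iota t2 * b)).

(* Write L as the free left Λ-module on the ι t, t ∈ T.  Since ι t acts on V and on
   σ by the same scalar ω t, every x = Σ c_t ι t acts on both as the element
   Σ ω t c_t of Λ.  Hence the Λ- and L-submodules of V coincide, as do the Λ- and
   L-linear maps from subquotients of V onto σ, so a composition series of V over Λ
   is one over L with the same factors isomorphic to σ, and the Jordan-Hölder theorem
   gives the equality of multiplicities.
   Composition series exist because the Jacobson radical J of the Artinian algebra L
   is nilpotent and L/J is a finite sum of simple modules: each layer J^k V/J^(k+1) V
   is then semisimple, hence of finite length since V is Artinian.  Jordan-Hölder is
   proved with the Zassenhaus matching of the factors of two series. *)

From HB Require Import structures.
From mathcomp Require Import all_boot all_order all_algebra all_fingroup.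
From mathcomp Require Import boolp classical_sets.
Import GRing.Theory.
Set Implicit Arguments. Unset Strict Implicit. Unset Printing Implicit Defensive.
Local Open Scope ring_scope.
Local Open Scope classical_set_scope.

Section ChainConditions.
Variable T : Type.
Implicit Types (P Q C : set (set T)).

Definition dcc P := forall U : nat -> set T, (forall t, P (U t)) ->
  (forall t, U t.+1 `<=` U t) -> exists N, forall t, (N <= t)%N -> U t = U N.

Definition adjacent P (X Y : set T) := [/\ P X, P Y, X `<=` Y &
  forall Z, P Z -> X `<=` Z -> Z `<=` Y -> Z = X \/ Z = Y].

Lemma dcc_exists_minimal P Q : dcc P -> Q `<=` P -> Q !=set0 ->
  exists2 X, Q X & forall Y, Q Y -> Y `<=` X -> Y = X.
Proof.
move=> dccP QP [X0 QX0]; apply: contrapT => nomin.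
have smaller (X : {X | Q X}) :
    {Y : {X | Q X} | sval Y `<=` sval X /\ sval Y <> sval X}.
  apply: cid; apply: contrapT => noY; apply: nomin; exists (sval X) => [|Y QY YX].
    exact: svalP.
  by apply: contrapT => neq; apply: noY; exists (exist _ Y QY).
pose U t := sval (iter t (fun Z => sval (smaller Z)) (exist _ X0 QX0)).
have [t|t|N UN] := dccP U; first by apply: QP; exact: svalP.
  by rewrite /U /=; case: (smaller (iter t _ _)) => ? [].
by move: (UN N.+1 (leqnSn N)); rewrite /U /=; case: (smaller (iter N _ _)) => ? [].
Qed.

Lemma zorn_exists_maximal P (X0 : set T) : P X0 ->
  (forall C, C !=set0 -> C `<=` P -> total_on C subset -> P (\bigcup_(X in C) X)) ->
  exists2 M, P M /\ X0 `<=` M & forall Y, P Y -> M `<=` Y -> Y = M.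
Proof.
move=> PX0 chainP; pose S := {X | P X /\ X0 `<=` X}.
have [M Mmax] : exists M : S, forall Y, `[< sval M `<=` sval Y >] -> Y = M.
  apply: Zorn.
- by move=> X; apply/asboolP.
- by move=> X Y Z /asboolP XY /asboolP YZ; apply/asboolP; exact: subset_trans YZ.
- by move=> [X ?] [Y ?] /asboolP XY /asboolP YX; apply: eq_exist; exact/seteqP.
- move=> C Ctot; have [[X CX]|C0] := pselect (C !=set0); last first.
    exists (exist _ X0 (conj PX0 (@subset_refl _ _))) => Y CY.
    by case: C0; exists Y.
  have PB : P (\bigcup_(Y in sval @` C) Y).
    apply: chainP; first by exists (sval X), X.
      by move=> _ [Y _ <-]; case: (svalP Y).
    move=> _ _ [Y CY <-] [Z CZ <-].
    by case: (Ctot Y Z CY CZ) => /asboolP; [left|right].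
  have X0B : X0 `<=` \bigcup_(Y in sval @` C) Y.
    by move=> x /(proj2 (svalP X)) Xx; exists (sval X) => //; exists X.
  exists (exist (fun X => P X /\ X0 `<=` X) _ (conj PB X0B)) => Y CY; apply/asboolP => y Yy.
  by exists (sval Y) => //; exists Y.
case: M Mmax => M [PM X0M] Mmax; exists M => // Y PY MY.
have X0Y : X0 `<=` Y by exact: subset_trans MY.
by have := Mmax (exist _ Y (conj PY X0Y)) (asboolT MY) => /(congr1 sval).
Qed.

End ChainConditions.

Definition addset (M : zmodType) (X Y : set M) : set M := [set x + y | x in X & y in Y].

Lemma addsetC (M : zmodType) (X Y : set M) : addset X Y = addset Y X.
Proof.
by apply/seteqP; split=> _ [x Xx [y Yy <-]]; exists y => //; exists x; rewrite // addrC.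
Qed.

Section Submodules.
Variables (F : fieldType) (L : algType F) (V : lmodType L) (A : {pred L}).
Implicit Types (U X Y Z G : set V) (w : V).

Lemma submod0 U : submod A U -> U 0.
Proof. by case. Qed.

Lemma submodD U u w : submod A U -> U u -> U w -> U (u + w).
Proof. by case=> _ + _; apply. Qed.

Lemma submodZ U a u : submod A U -> a \in A -> U u -> U (a *: u).
Proof. by case=> _ _; apply. Qed.

Lemma submod_sum U I r (P : pred I) (f : I -> V) :
  submod A U -> (forall i, P i -> U (f i)) -> U (\sum_(i <- r | P i) f i).
Proof. by move=> sU fU; elim/big_ind: _ => [|x y|//]; [exact: submod0 sU|exact: submodD sU]. Qed.

Lemma submod_addset X Y : submod A X -> submod A Y -> submod A (addset X Y).
Proof.
move=> sX sY; split.
- by exists 0; [exact: submod0|exists 0; [exact: submod0|rewrite addr0]].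
- move=> _ _ [x Xx [y Yy <-]] [x' Xx' [y' Yy' <-]].
  by exists (x + x'); [exact: submodD|exists (y + y'); [exact: submodD|rewrite addrACA]].
- move=> a _ aA [x Xx [y Yy <-]].
  by exists (a *: x); [exact: submodZ|exists (a *: y); [exact: submodZ|rewrite scalerDr]].
Qed.

Lemma submod_bigcap I (D : set I) (f : I -> set V) :
  (forall i, D i -> submod A (f i)) -> submod A (\bigcap_(i in D) f i).
Proof.
move=> sf; split=> [i Di|u w uf wf i Di|a u aA uf i Di].
- exact: submod0 (sf i Di).
- by apply: submodD (sf i Di) _ _; [apply: uf|apply: wf].
- by apply: submodZ (sf i Di) aA _; apply: uf.
Qed.

Lemma submod_setI X Y : submod A X -> submod A Y -> submod A (X `&` Y).
Proof.
move=> sX sY; split=> [|u w [Xu Yu] [Xw Yw]|a u aA [Xu Yu]].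
- by split; [exact: submod0 sX|exact: submod0 sY].
- by split; [exact: submodD sX Xu Xw|exact: submodD sY Yu Yw].
- by split; [exact: submodZ sX aA Xu|exact: submodZ sY aA Yu].
Qed.

Lemma submod_bigcup (C : set (set V)) : C !=set0 -> C `<=` submod A ->
  total_on C subset -> submod A (\bigcup_(X in C) X).
Proof.
move=> [X CX] CA Ctot; split; first by exists X => //; exact: submod0 (CA X CX).
  move=> u w [Y CY Yu] [Z CZ Zw].
  case: (Ctot Y Z CY CZ) => [YZ|ZY]; [exists Z|exists Y] => //.
    by apply: submodD (CA _ CZ) _ Zw; exact: YZ.
  by apply: submodD (CA _ CY) Yu _; exact: ZY.
by move=> a u aA [Y CY Yu]; exists Y => //; exact: submodZ (CA _ CY) aA Yu.
Qed.

Lemma addset_subl X Y : submod A Y -> X `<=` addset X Y.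
Proof. by move=> sY x Xx; exists x => //; exists 0; [exact: submod0|rewrite addr0]. Qed.

Lemma addset_subr X Y : submod A X -> Y `<=` addset X Y.
Proof. by move=> sX y Yy; exists 0; [exact: submod0|exists y; rewrite ?add0r]. Qed.

Lemma addset_sub X Y Z : submod A Z -> X `<=` Z -> Y `<=` Z -> addset X Y `<=` Z.
Proof. by move=> sZ XZ YZ _ [x /XZ Zx [y /YZ Zy <-]]; exact: submodD. Qed.

Lemma submod_smallest G : submod A (smallest (submod A) G).
Proof. by apply: submod_bigcap => U []. Qed.

Lemma submodT : submod A [set: V].
Proof. by []. Qed.

Lemma submod_zero : submod A [set 0 : V].
Proof. by split=> [|_ _ -> ->|a _ _ ->]; rewrite ?addr0 ?scaler0. Qed.

Lemma submod_image_scale (D : set L) w : submod (V := L^o) predT D ->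
  submod A [set d *: w | d in D].
Proof.
move=> [D0 DD DZ]; split; first by exists 0; rewrite ?scale0r.
  by move=> _ _ [a Da <-] [b Db <-]; exists (a + b); [exact: DD|rewrite scalerDl].
by move=> b _ _ [a Da <-]; exists (b * a); [exact: DZ|rewrite scalerA].
Qed.

Hypothesis AN1 : -1 \in A.

Lemma submodN U u : submod A U -> U u -> U (- u).
Proof. by move=> sU Uu; rewrite -scaleN1r; exact: submodZ. Qed.

Lemma submodB U u w : submod A U -> U u -> U w -> U (u - w).
Proof. by move=> sU Uu Uw; apply: submodD => //; exact: submodN. Qed.

End Submodules.

(** * The Jacobson radical *)

Section JacobsonRadical.
Variables (F : fieldType) (L : algType F).
Local Notation lideal := (submod (V := L^o) predT).
Implicit Types (I K m : set L) (x y : L).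

Lemma left_idealE I : left_ideal I <-> lideal I.
Proof. by split=> -[I0 ID IM]; split=> // a x; [move=> _; exact: IM|exact: IM]. Qed.

Lemma lidealM I a x : lideal I -> I x -> I (a * x).
Proof. by move=> lI; exact: (submodZ (V := L^o) lI). Qed.

Lemma lidealB I x y : lideal I -> I x -> I y -> I (x - y).
Proof. exact: (submodB (V := L^o) (A := predT) isT). Qed.

Lemma lideal_cyclic x : lideal (range (fun a => a * x)).
Proof.
split; first by exists 0; rewrite ?mul0r.
  by move=> _ _ [a _ <-] [b _ <-]; exists (a + b); rewrite ?mulrDl.
by move=> b _ _ [a _ <-]; exists (b * a); rewrite -?mulrA.
Qed.

Definition left_unit x := exists b, b * x = 1.

Definition jacobson : set L := [set y | forall a, left_unit (1 - a * y)].

Lemma left_unit_swap u v : left_unit (1 - u * v) -> left_unit (1 - v * u).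
Proof.
move=> [w wuv]; exists (1 + v * w * u); rewrite mulrDl mul1r.
have -> : v * w * u * (1 - v * u) = v * (w * (1 - u * v)) * u.
  by rewrite !mulrBr !mulrBl !mulr1 !mulrA.
by rewrite wuv mulr1 subrK.
Qed.

Lemma lideal_jacobson : lideal jacobson.
Proof.
split=> [a|y z Jy Jz a|b y _ Jy a]; first by exists 1; rewrite mulr0 subr0 mulr1.
  have [u uy] := Jy a; have [v vz] := Jz (u * a); exists (v * u).
  by rewrite (mulrDr a) opprD addrA -mulrA mulrBr uy mulrA vz.
by have := Jy (a * b); rewrite -mulrA.
Qed.

Lemma jacobsonMr y c : jacobson y -> jacobson (y * c).
Proof. by move=> Jy a; rewrite mulrA; apply: left_unit_swap; rewrite mulrA; exact: Jy. Qed.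

Lemma jacobson_fixed0 y x : jacobson y -> y * x = x -> x = 0.
Proof.
move=> Jy yx; have [b] := Jy 1; rewrite mul1r => byy.
by rewrite -[x]mul1r -byy -mulrA mulrBl mul1r yx subrr mulr0.
Qed.

Definition maximal_lideal m :=
  [/\ lideal m, ~ m 1 & forall K, lideal K -> m `<=` K -> K = m \/ K 1].

Lemma maximal_lideal_unit_mod m x : maximal_lideal m -> ~ m x -> exists a, m (1 - a * x).
Proof.
move=> [lm m1 mmax] mx; pose K := addset m (range (fun a => a * x)).
have lK : lideal K by apply: submod_addset lm (lideal_cyclic x).
have [eK|[u mu [_ [a _ <-]] au1]] := mmax K lK (addset_subl (lideal_cyclic x)).
  by case: mx; rewrite -eK; apply: (addset_subr lm); exists 1; rewrite ?mul1r.
by exists a; rewrite -au1 addrK.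
Qed.

Lemma exists_maximal_lideal I : lideal I -> ~ I 1 -> exists2 m, maximal_lideal m & I `<=` m.
Proof.
move=> lI I1; pose P K := lideal K /\ ~ K 1.
have [|C C0 CP Ctot|m [[lm m1] Im] mmax] := @zorn_exists_maximal _ P I; first by [].
  split; first by apply: submod_bigcup => // K /CP[].
  by move=> [K /CP[_ K1]].
exists m => //; split=> // K lK mK; have [K1|K1] := pselect (K 1); first by right.
by left; apply: mmax.
Qed.

Lemma jacobsonP y : jacobson y <-> forall m, maximal_lideal m -> m y.
Proof.
split=> [Jy m mm|ym a].
  apply: contrapT => my; case: (mm) => lm m1 _; have [a ma] := maximal_lideal_unit_mod mm my.
  by apply: m1; have [b <-] := Jy a; exact: lidealM.
apply: contrapT => nu.
have [|m mm Im] := exists_maximal_lideal (lideal_cyclic (1 - a * y)).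
  by move=> [b _ bu]; apply: nu; exists b.
case: (mm) => lm m1 _; apply: m1; rewrite -(subrK (a * y) 1).
by apply: submodD lm _ (lidealM _ lm (ym m mm)); apply: Im; exists 1; rewrite ?mul1r.
Qed.

Lemma adjacent_setI_maximal (N m : set L) : lideal N -> maximal_lideal m ->
  adjacent lideal (N `&` m) N.
Proof.
move=> lN [lm m1 mmax]; split=> //; first exact: submod_setI.
move=> K lK NmK KN; pose K' := addset m K.
have lK' : lideal K' by apply: submod_addset.
have [eK'|[u mu [k Kk uk1]]] := mmax K' lK' (addset_subl lK).
  left; apply/seteqP; split=> // x Kx; split; first exact: KN.
  by rewrite -eK'; apply: (addset_subr lm).
right; apply/seteqP; split=> // x Nx; rewrite -[x]mulr1 -uk1 mulrDr.
apply: submodD lK _ (lidealM _ lK Kk); apply: NmK; split; last exact: lidealM.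
have -> : x * u = x - x * k by rewrite -[in X in X - _](mulr1 x) -uk1 mulrDr addrK.
exact: lidealB lN Nx (lidealM _ lN (KN _ Kk)).
Qed.

Lemma smallest_lideal_mulr (G : set L) s x : smallest lideal G s -> s * x != 0 ->
  exists2 t, G t & t * x != 0.
Proof.
move=> Gs sx; apply: contrapT => noG; move/eqP: sx; apply.
have lann : lideal [set z | z * x = 0].
  split=> [|y z yx zx|a z _ zx] /=; first by rewrite mul0r.
    by rewrite mulrDl yx zx addr0.
  by rewrite -mulrA zx mulr0.
suff Gann : G `<=` [set z | z * x = 0] by exact: smallest_sub lann Gann _ Gs.
by move=> z Gz; apply: contrapT => zx; apply: noG; exists z => //; apply/eqP.
Qed.

End JacobsonRadical.

Arguments jacobson {F} L.

Section ArtinianRing.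
Variables (F : fieldType) (L : algType F).
Local Notation lideal := (submod (V := L^o) predT).
Hypothesis art : artinian L.

Lemma dcc_lideal : dcc lideal.
Proof.
move=> U lU Udec.
have [N UN] := art (fun t => (left_idealE (U t)).2 (lU t)) (fun t => @Udec t).
by exists N => t Nt; apply/seteqP; split=> x /(UN t Nt x).
Qed.

Lemma jacobson_finite_cap : exists r (f : 'I_r -> set L),
  (forall i, maximal_lideal (f i)) /\ jacobson L = \bigcap_i f i.
Proof.
pose Q X := exists r (f : 'I_r -> set L),
  (forall i, maximal_lideal (f i)) /\ X = \bigcap_i f i.
have [||_ [r [f [mf ->]]] Xmin] := dcc_exists_minimal dcc_lideal (Q := Q).
- move=> _ [r [f [mf ->]]]; apply: submod_bigcap => i _; by case: (mf i).
- by exists setT, 0%N, (fun _ => setT); split=> [[]//|]; apply/seteqP; split.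
exists r, f; split=> //; apply/seteqP; split=> y.
  by move=> Jy i _; exact: (jacobsonP y).1 Jy _ (mf i).
move=> fy; apply/jacobsonP => m mm.
pose g i := if unlift ord_max i is Some j then f j else m.
have gf : \bigcap_i g i `<=` \bigcap_i f i.
  by move=> x gx j _; have := gx (lift ord_max j) I; rewrite /g liftK.
have Qg : Q (\bigcap_i g i) by exists r.+1, g; split=> // i; rewrite /g; case: unlift.
by have := Xmin _ Qg gf; move/seteqP=> [_ /(_ y fy)] /(_ ord_max I); rewrite /g unlift_none.
Qed.

Lemma jacobson_irredundant_cap : exists r (f : 'I_r -> set L),
  [/\ forall i, maximal_lideal (f i), jacobson L = \bigcap_i f i &
      forall i, exists2 e, (forall j, j != i -> f j e) & f i (1 - e)].
Proof.
pose Q r := exists f : 'I_r -> set L,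
  (forall i, maximal_lideal (f i)) /\ jacobson L = \bigcap_i f i.
have exQ : exists r, `[< Q r >].
  by have [r [f ?]] := jacobson_finite_cap; exists r; apply/asboolP; exists f.
case: (ex_minnP exQ) => -[|r] /asboolP[f [mf eJ]] rmin; first by exists 0%N, f; split=> // -[].
exists r.+1, f; split=> // i; apply: contrapT => noe.
have Nif x : (forall j, j != i -> f j x) -> f i x.
  move=> Nx; apply: contrapT => fx; have [a fa] := maximal_lideal_unit_mod (mf i) fx.
  apply: noe; exists (a * x) => // j ji.
  by case: (mf j) => lj _ _; exact: lidealM lj (Nx j ji).
suff /rmin : `[< Q r >] by rewrite ltnn.
apply/asboolP; exists (fun k => f (lift i k)); split=> //.
rewrite eJ; apply/seteqP; split=> x fx k _; first exact: fx.
have [j ->|->] := unliftP i k; first exact: fx.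
by apply: Nif => j; rewrite eq_sym => /unlift_some[l -> _]; exact: fx.
Qed.

(* L/J is the sum of the simple modules (N i)/J, and the e i split 1 modulo J. *)
Lemma jacobson_semisimple : exists r (N : 'I_r -> set L) (e : 'I_r -> L),
  [/\ forall i, adjacent lideal (jacobson L) (N i), forall i, N i (e i)
    & jacobson L (1 - \sum_i e i)].
Proof.
have [r [f [mf eJ fe]]] := jacobson_irredundant_cap.
have lf i : lideal (f i) by case: (mf i).
have /choice[e fe'] : forall i, exists e, (forall j, j != i -> f j e) /\ f i (1 - e).
  by move=> i; have [e ? ?] := fe i; exists e.
pose N i := \bigcap_(j in [set j | j != i]) f j.
exists r, N, e; split=> [i|i j ji|].
- have -> : jacobson L = N i `&` f i.
    rewrite eJ; apply/seteqP; split=> [x fx|x [Nx fx] j _]; first by split=> [j _|]; exact: fx.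
    by have [->|ji] := eqVneq j i; last exact: Nx.
  by apply: adjacent_setI_maximal (mf i); apply: submod_bigcap => j _.
- exact: (fe' i).1.
rewrite eJ => j _; rewrite (bigD1 j) //= opprD addrA.
apply: lidealB (lf j) (fe' j).2 _; apply: submod_sum (lf j) _ => i ij.
by apply: (fe' i).1; rewrite eq_sym.
Qed.

(* [jprod k]: the products y_1 * ... * y_k * x with all y_i in J; they span J^k. *)
Fixpoint jprod k : set L :=
  if k is k'.+1 then [set y * x | y in jacobson L & x in jprod k'] else setT.

Lemma jprod_pred k x : jprod k.+1 x -> jprod k x.
Proof.
elim: k x => [//|k IHk] _ [y Jy [z kz <-]].
by exists y => //; exists z => //; exact: IHk.
Qed.

Lemma jprod_jacobson k x : jprod k.+1 x -> jacobson L x.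
Proof. by move=> [y Jy [z _ <-]]; exact: jacobsonMr. Qed.

Lemma jprod_split k l z : jprod (k + l)%N z ->
  exists p q, [/\ z = p * q, jprod k p & jprod l q].
Proof.
elim: k z => [|k IHk] z kz; first by exists 1, z; rewrite mul1r.
case: kz => y Jy [x /IHk[p [q [-> kp lq]]] <-].
by exists (y * p), q; split=> //; [rewrite mulrA|exists y => //; exists p].
Qed.

(* Once the powers J^k are stable from N on, a minimal left ideal K with
   J^(N+1) K <> 0 would be generated by some q x with q in J^(N+1), whence
   x = (a q) x with a q in J and x = 0. *)
Lemma jacobson_nilpotent : exists M, forall s, jprod M s -> s = 0.
Proof.
pose Jpow k := smallest lideal (jprod k).
have Jdec k : Jpow k.+1 `<=` Jpow k.
  apply: smallest_sub; first exact: submod_smallest.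
  exact: subset_trans (@jprod_pred k) (@sub_gen_smallest _ _ _).
have [N JN] := dcc_lideal (fun k => @submod_smallest _ _ L^o predT (jprod k)) Jdec.
exists N.+1 => s0 Ns0; apply: contrapT => s0_neq0.
pose P K := lideal K /\ exists x s, [/\ K x, jprod N.+1 s & s * x != 0].
have PI : P `<=` lideal by move=> K [].
have [|K [lK [x [s [Kx Ns sx]]]] Kmin] := dcc_exists_minimal dcc_lideal PI.
  by exists setT; split=> //; exists 1, s0; rewrite mulr1; split=> //; apply/eqP.
have [t Nt tx] : exists2 t, jprod (N.+1 + N.+1)%N t & t * x != 0.
  apply: smallest_lideal_mulr sx; rewrite (JN (N.+1 + N.+1)%N (ltnW (leq_addr _ _))).
  by rewrite -(JN N.+1) //; exact: sub_gen_smallest.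
have [p [q [tpq Np Nq]]] := jprod_split Nt.
pose K' := range (fun a => a * (q * x)).
have K'K : K' `<=` K by move=> _ [a _ <-]; apply: lidealM lK (lidealM _ lK Kx).
have PK' : P K'.
  split; first exact: lideal_cyclic.
  by exists (q * x), p; split=> //; [exists 1; rewrite ?mul1r|rewrite mulrA -tpq].
have [a _ xaqx] : K' x by rewrite (Kmin K' PK' K'K).
move/eqP: sx; apply; suff -> : x = 0 by rewrite mulr0.
apply: (@jacobson_fixed0 _ _ (a * q)); last by rewrite -mulrA.
exact: lidealM (lideal_jacobson L) (jprod_jacobson Nq).
Qed.

End ArtinianRing.

(** * Composition series over an Artinian algebra *)

Section ArtinianModules.
Variables (F : fieldType) (L : algType F) (V : lmodType L).
Local Notation lideal := (submod (V := L^o) predT).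
Local Notation lsubmod := (submod (V := V) predT).
Implicit Types (U X Y Z M : set V) (w : V).
Hypothesis art : artinian L.

Lemma lsubmodB U u w : lsubmod U -> U u -> U w -> U (u - w).
Proof. exact: (submodB (V := V) (A := predT) isT). Qed.

Definition dcc_below M := dcc [set U | lsubmod U /\ U `<=` M].

Lemma dcc_below_zero : dcc_below [set 0].
Proof.
move=> U UM _; exists 0%N => t _; apply/seteqP.
by split=> v /(UM _).2 ->; exact: submod0 (UM _).1.
Qed.

(* A descending chain in M + L w stabilizes once its traces on M and its left ideals
   of w-coefficients modulo M do. *)
Lemma dcc_below_add_cyclic M w : lsubmod M -> dcc_below M ->
  dcc_below (addset M (range (fun a => a *: w))).
Proof.
move=> sM dM U UM Udec; have sU t := (UM t).1.
have UN s t : (s <= t)%N -> U t `<=` U s.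
  apply: (homo_leq (r := fun X Y => Y `<=` X)) => [X|Y X Z YX ZY|]; last exact: Udec.
    exact: subset_refl.
  exact: subset_trans ZY YX.
have [N1 UMN1] := dM (fun t => U t `&` M)
  (fun t => conj (submod_setI (sU t) sM) (@subIsetr _ _ _)) (fun t => @setSI _ M _ _ (Udec t)).
pose I t := [set a | exists2 u, U t u & M (u - a *: w)].
have lI t : lideal (I t).
  split=> [|a b [u Uu Mu] [v Uv Mv]|c a _ [u Uu Mu]].
  - by exists 0; [exact: submod0 (sU t)|rewrite scale0r subr0; exact: submod0 sM].
  - exists (u + v); first exact: submodD (sU t) Uu Uv.
    by rewrite scalerDl opprD addrACA; exact: submodD sM Mu Mv.
  - exists (c *: u); first exact: submodZ (sU t) isT Uu.
    by rewrite -scalerA -scalerBr; exact: submodZ sM isT Mu.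
have Idec t : I t.+1 `<=` I t by move=> a [u Uu Mu]; exists u => //; exact: Udec.
have [N2 IN2] := dcc_lideal art lI Idec.
exists (maxn N1 N2) => t Nt; apply/seteqP; split; first exact: UN.
move=> u UNu; have [m Mm [_ [a _ <-] mau]] := (UM _).2 u UNu.
have : I t a.
  rewrite (IN2 t (leq_trans (leq_maxr _ _) Nt)) -(IN2 _ (leq_maxr N1 N2)).
  by exists u; rewrite // -mau addrK.
case=> u' Uu' Mu'; have Uu'N : U (maxn N1 N2) u' := UN _ _ Nt _ Uu'.
have : (U (maxn N1 N2) `&` M) (u - u').
  split; first exact: lsubmodB (sU _) UNu Uu'N.
  have -> : u - u' = m - (u' - a *: w) by rewrite opprB addrA mau.
  exact: lsubmodB sM Mm Mu'.
rewrite UMN1 ?leq_maxl // -(UMN1 t) ?(leq_trans (leq_maxl _ _) Nt) // => -[Uuu' _].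
by rewrite -[u](subrK u'); exact: submodD (sU t) Uuu' Uu'.
Qed.

Lemma dcc_fin_gen : fin_gen V predT -> dcc lsubmod.
Proof.
move=> [n [g gen]].
pose M := foldr (fun i M => addset M (range (fun a => a *: g i))) [set 0].
have sM s : lsubmod (M s) /\ dcc_below (M s).
  elim: s => [|i s [sMs dMs]]; first by split; [exact: submod_zero|exact: dcc_below_zero].
  split; first exact: submod_addset sMs (submod_image_scale predT (g i) (submodT L^o predT)).
  exact: dcc_below_add_cyclic.
have MV v : M (index_enum 'I_n) v.
  have [c [_ ->]] := gen v; elim: (index_enum 'I_n) => [|i s IHs] /=.
    by rewrite big_nil.
  rewrite big_cons addrC; exists (\sum_(j <- s) c j *: g j) => //.
  by exists (c i *: g i) => //; exists (c i).
move=> U sU; apply: (sM (index_enum 'I_n)).2 => t.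
by split=> // v _; exact: MV.
Qed.

Definition jacobson_annihilates A X := forall y v, jacobson L y -> X v -> A (y *: v).

Lemma adjacent_addset_scale A (C D : set L) w : lsubmod A -> adjacent lideal C D ->
  (forall c, C c -> A (c *: w)) -> adjacent lsubmod A (addset A [set d *: w | d in D]).
Proof.
move=> sA [lC lD CD CDadj] CwA; have sDw := submod_image_scale predT w lD.
split=> //; [exact: submod_addset sA sDw|exact: addset_subl sDw|move=> Z sZ AZ ZS].
pose D' := [set d | D d /\ Z (d *: w)].
have lD' : lideal D'.
  split=> [|a b [Da Za] [Db Zb]|c a _ [Da Za]].
  - by split; [exact: submod0 lD|rewrite scale0r; exact: submod0 sZ].
  - by split; [exact: submodD lD Da Db|rewrite scalerDl; exact: submodD sZ Za Zb].
  - by split; [exact: submodZ lD isT Da|rewrite -scalerA; exact: submodZ sZ isT Za].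
have CD' : C `<=` D' by move=> c Cc; split; [exact: CD|exact: AZ (CwA c Cc)].
case: (CDadj D' lD' CD' (fun d => @proj1 _ _)) => eD'; [left|right].
  apply/seteqP; split=> // z Zz; have [a Aa [_ [d Dd <-]] adz] := ZS z Zz.
  have Zdw : Z (d *: w).
    have -> : d *: w = z - a by rewrite -adz addrC addKr.
    exact: lsubmodB sZ Zz (AZ a Aa).
  rewrite -adz; apply: submodD sA Aa (CwA d _); rewrite -eD'; split=> //.
apply/seteqP; split=> // _ [a Aa [_ [d Dd <-]] <-]; apply: submodD sZ (AZ a Aa) _.
by have [] : D' d by rewrite eD'.
Qed.

Section Semisimplicity.
Variables (r : nat) (N : 'I_r -> set L) (e : 'I_r -> L).
Hypothesis NJ : forall i, adjacent lideal (jacobson L) (N i).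
Hypothesis Ne : forall i, N i (e i).
Hypothesis Je : jacobson L (1 - \sum_i e i).

Lemma jacobson_escape Y w : lsubmod Y -> (forall y, jacobson L y -> Y (y *: w)) ->
  ~ Y w -> exists i, ~ Y (e i *: w).
Proof.
move=> sY Jw Yw; apply: contrapT => noi; apply: Yw.
have Yew i : Y (e i *: w) by apply: contrapT => Yew; apply: noi; exists i.
rewrite -[w]scale1r -(subrK (\sum_i e i) 1) scalerDl scaler_suml.
exact: submodD sY (Jw _ Je) (submod_sum _ sY (fun i _ => Yew i)).
Qed.

(* A submodule Y maximal with Y ∩ S ⊆ A (Zorn) satisfies X ⊆ Y + S: otherwise some
   simple extension A + (N i) x of A escapes Y + S and could be added to Y. *)
Lemma jacobson_complement A X S : lsubmod A -> lsubmod X ->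
  jacobson_annihilates A X -> S `<=` X -> adjacent lsubmod A S ->
  exists Y, [/\ lsubmod Y, A `<=` Y, Y `<=` X, Y `&` S `<=` A & X `<=` addset Y S].
Proof.
move=> sA sX JXA SX [_ sS AS _]; pose P Y := [/\ lsubmod Y, A `<=` Y, Y `<=` X & Y `&` S `<=` A].
have [|C [Z CZ] CP Ctot|Y [[sY AY YX YSA] _] Ymax] := zorn_exists_maximal (P := P) (X0 := A).
- by split; [|exact: subset_refl|exact: subset_trans AS SX|exact: subIsetl].
- split; first by apply: submod_bigcup Ctot; [exists Z|move=> ? /CP[]].
  + by move=> a Aa; exists Z => //; have [_ AZ _ _] := CP Z CZ; exact: AZ.
  + by move=> v [Z' /CP[_ _ ZX _]]; exact: ZX.
  + by move=> v [[Z' /CP[_ _ _ ZSA] Z'v] Sv]; exact: ZSA.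
exists Y; split=> // x Xx; apply: contrapT => YSx; have sYS := submod_addset sY sS.
have [i YSe] := jacobson_escape sYS (fun y Jy => addset_subl sS (AY _ (JXA y x Jy Xx))) YSx.
pose S' := addset A [set d *: x | d in N i].
have [_ sS' AS' S'adj] := adjacent_addset_scale sA (NJ i) (fun c Jc => JXA c x Jc Xx).
have S'e : S' (e i *: x) by apply: (addset_subr sA); exists (e i).
have YSS'A : addset Y S `&` S' `<=` A.
  have AYSS' : A `<=` addset Y S `&` S'.
    by move=> a Aa; split; [apply: (addset_subl sS); exact: AY|exact: AS'].
  have [-> //|eS'] := S'adj _ (submod_setI sYS sS') AYSS' (@subIsetr _ _ _).
  by case: YSe; have [] : (addset Y S `&` S') (e i *: x) by rewrite eS'.
have PYS' : P (addset Y S').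
  split; [exact: submod_addset|exact: subset_trans (addset_subl sS')|idtac|idtac].
    apply: (addset_sub sX YX (addset_sub sX (subset_trans AS SX) _)).
    by move=> _ [d _ <-]; exact: submodZ sX isT Xx.
  move=> _ [[y Yy [s' S's' <-]] Sys']; apply: YSA; split=> //.
  have As' : A s'.
    apply: YSS'A; split=> //; exists (0 - y); first exact: lsubmodB sY (submod0 sY) Yy.
    by exists (y + s'); rewrite // sub0r addKr.
  exact: submodD sY Yy (AY _ As').
apply: YSe; apply: (addset_subl sS); rewrite -(Ymax _ PYS' (addset_subl sS')).
exact: addset_subr sY _ S'e.
Qed.

Lemma jacobson_adjacent_below A X : lsubmod A -> lsubmod X -> A `<=` X ->
  jacobson_annihilates A X -> ~ X `<=` A ->
  exists Y, [/\ A `<=` Y, ~ X `<=` Y & adjacent lsubmod Y X].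
Proof.
move=> sA sX AX JXA XA.
have [x Xx Ax] : exists2 x, X x & ~ A x.
  by apply: contrapT => nx; apply: XA => x Xx; apply: contrapT => Ax; apply: nx; exists x.
have [i Aex] := jacobson_escape sA (fun y Jy => JXA y x Jy Xx) Ax.
pose S := addset A [set d *: x | d in N i].
have AS := adjacent_addset_scale sA (NJ i) (fun c Jc => JXA c x Jc Xx).
have SX : S `<=` X.
  by apply: (addset_sub sX AX) => _ [d _ <-]; exact: submodZ sX isT Xx.
have Sex : S (e i *: x) by apply: (addset_subr sA); exists (e i).
have [Y [sY AY YX YSA XYS]] := jacobson_complement sA sX JXA SX AS.
exists Y; split=> //; first by move=> XY; apply: Aex; apply: YSA; split=> //; apply: XY; exact: SX.
case: AS => _ sS AS Sadj; split=> // Z sZ YZ ZX.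
have AZS : A `<=` Z `&` S by move=> a Aa; split; [exact: YZ (AY _ Aa)|exact: AS].
have [eZS|eZS] := Sadj _ (submod_setI sZ sS) AZS (@subIsetr _ _ _); [left|right].
  apply/seteqP; split=> // z Zz; have [y Yy [s Ss yse]] := XYS z (ZX z Zz).
  have : (Z `&` S) s.
    split=> //; have -> : s = z - y by rewrite -yse addrC addKr.
    exact: lsubmodB sZ Zz (YZ _ Yy).
  by rewrite eZS => As; rewrite -yse; exact: submodD sY Yy (AY _ As).
apply/seteqP; split=> // z /XYS[y Yy [s Ss <-]].
have [Zs _] : (Z `&` S) s by rewrite eZS.
exact: submodD sZ (YZ _ Yy) Zs.
Qed.

End Semisimplicity.

Inductive fin_length (A : set V) : set V -> Prop :=
| fin_length_refl : fin_length A A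
| fin_length_step B C : fin_length A B -> adjacent lsubmod B C -> fin_length A C.

Lemma fin_length_trans A B C : fin_length A B -> fin_length B C -> fin_length A C.
Proof. by move=> AB; elim=> // C' D _ IH st; exact: fin_length_step IH st. Qed.

Lemma fin_length_annihilated A B : fin_gen V predT -> lsubmod A -> lsubmod B ->
  A `<=` B -> jacobson_annihilates A B -> fin_length A B.
Proof.
move=> fgV sA sB AB JBA; have [r [N [e [NJ Ne Je]]]] := jacobson_semisimple art.
pose Q X := [/\ lsubmod X, A `<=` X, X `<=` B & fin_length X B].
have QP : Q `<=` lsubmod by move=> X [].
have [|X [sX AX XB XBfin] Xmin] := dcc_exists_minimal (dcc_fin_gen fgV) QP.
  by exists B; split=> //; exact: fin_length_refl.
have [XA|XA] := pselect (X `<=` A); first by have -> : A = X by apply/seteqP.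
have JXA : jacobson_annihilates A X by move=> y v Jy Xv; exact: JBA y v Jy (XB v Xv).
have [Y [AY XY YX]] := jacobson_adjacent_below NJ Ne Je sA sX AX JXA XA.
have [sY _ YsubX _] := YX.
have QY : Q Y.
  split=> //; first exact: subset_trans XB.
  exact: fin_length_trans (fin_length_step (fin_length_refl Y) YX) XBfin.
by case: XY; rewrite (Xmin Y QY YsubX).
Qed.

Definition jacobson_pow_mod k := smallest lsubmod [set s *: v | s in jprod k & v in setT].

Lemma submod_jacobson_pow_mod k : lsubmod (jacobson_pow_mod k).
Proof. exact: submod_smallest. Qed.

Lemma jacobson_pow_modS k : jacobson_pow_mod k.+1 `<=` jacobson_pow_mod k.
Proof.
apply: smallest_sub (submod_jacobson_pow_mod k) _ => _ [s /jprod_pred ks [v _ <-]].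
by apply: sub_gen_smallest; exists s => //; exists v.
Qed.

Lemma jacobson_annihilates_pow_mod k :
  jacobson_annihilates (jacobson_pow_mod k.+1) (jacobson_pow_mod k).
Proof.
have sJk1 := submod_jacobson_pow_mod k.+1.
pose U := [set u | forall y, jacobson L y -> jacobson_pow_mod k.+1 (y *: u)].
have sU : lsubmod U.
  split=> [y _|u w Uu Uw y Jy|a u _ Uu y Jy].
  - by rewrite scaler0; exact: submod0 sJk1.
  - by rewrite scalerDr; exact: submodD sJk1 (Uu y Jy) (Uw y Jy).
  - by rewrite scalerA; exact: Uu _ (jacobsonMr a Jy).
suff JU : jacobson_pow_mod k `<=` U by move=> y v Jy /JU; apply.
apply: smallest_sub sU _ => _ [s ks [v _ <-]] y Jy; rewrite scalerA.
by apply: sub_gen_smallest; exists (y * s); [exists y => //; exists s|exists v].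
Qed.

Lemma fin_length_full : fin_gen V predT -> fin_length [set 0] setT.
Proof.
move=> fgV; have [M JM] := jacobson_nilpotent art.
have <- : jacobson_pow_mod 0 = setT.
  apply/seteqP; split=> // v _; apply: sub_gen_smallest.
  by exists 1 => //; exists v; rewrite ?scale1r.
have <- : jacobson_pow_mod M = [set 0].
  apply/seteqP; split=> [|_ ->]; last exact: submod0 (submod_jacobson_pow_mod M).
  apply: smallest_sub (@submod_zero _ _ V predT) _ => _ [s /JM -> [v _ <-]].
  by rewrite scale0r.
elim: M {JM} => [|k IHk]; first exact: fin_length_refl.
apply: fin_length_trans IHk; apply: fin_length_annihilated fgV _ _ _ _.
- exact: submod_jacobson_pow_mod.
- exact: submod_jacobson_pow_mod.
- exact: jacobson_pow_modS.
- exact: jacobson_annihilates_pow_mod.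
Qed.

Lemma fin_length_series B : fin_length [set 0] B -> exists n W,
  [/\ W 0%N = [set 0], W n = B, (forall i, (i <= n)%N -> lsubmod (W i)) &
      forall i, (i < n)%N -> adjacent lsubmod (W i) (W i.+1) /\ ~ W i.+1 `<=` W i].
Proof.
elim=> [|X Y _ [n [W [W0 Wn sW adjW]]] XY].
  by exists 0%N, (fun _ => [set 0]); split=> // i _; exact: submod_zero.
have [YX|YX] := pselect (Y `<=` X).
  exists n, W; split=> //; rewrite Wn; apply/seteqP; split=> //.
  by case: XY.
exists n.+1, (fun i => if (i <= n)%N then W i else Y); split=> [|/=|i|i].
- by rewrite leq0n.
- by rewrite ltnn.
- by case: ifP => [i_le_n _|_ _]; [exact: sW|case: XY].
rewrite ltnS => i_le_n; rewrite i_le_n; have [lt_in|n_le_i] := ltnP i n.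
  exact: adjW.
have -> : i = n by apply/eqP; rewrite eqn_leq i_le_n.
by rewrite Wn.
Qed.

Lemma exists_comp_series : fin_gen V predT -> exists n W, comp_series (V := V) predT n W.
Proof.
move=> fgV; have [n [W [W0 Wn sW adjW]]] := fin_length_series (fin_length_full fgV).
exists n, W; split=> [v|v|//|i /adjW[[_ _ WW Wadj] WiW]]; first by rewrite W0.
  by rewrite Wn.
split=> //.
  by apply: contrapT => nv; apply: WiW => v Wv; apply: contrapT => Wiv; apply: nv; exists v.
by move=> U sU WU UW; case: (Wadj U sU WU UW) => ->; [left|right].
Qed.

End ArtinianModules.

(** * The Jordan-Hölder theorem *)

Section SecondIsomorphism.
Variables (F : fieldType) (L : algType F) (V : lmodType L) (A : {pred L}).
Hypothesis AN1 : -1 \in A.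

(* [quotient_iso X Y S]: Y/X is isomorphic to S, encoded as in [factor_iso]. *)
Definition quotient_iso (X Y : set V) (S : lmodType L) := exists f : V -> S,
  [/\ forall u w, Y u -> Y w -> f (u + w) = f u + f w,
      forall a u, a \in A -> Y u -> f (a *: u) = a *: f u,
      forall x, exists u, Y u /\ f u = x
    & forall u, Y u -> (f u = 0 <-> X u)].

Variables (X P : set V) (S : lmodType L).
Hypotheses (sX : submod A X) (sP : submod A P).

Lemma quotient_iso_restrict : quotient_iso X (addset X P) S -> quotient_iso (P `&` X) P S.
Proof.
have PXP : P `<=` addset X P := addset_subr sX.
move=> [f [fD fZ fS fK]]; exists f; split=> [u w Pu Pw|a u aA Pu|y|u Pu].
- exact: fD (PXP _ Pu) (PXP _ Pw).
- exact: fZ aA (PXP _ Pu).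
- have [_ [[b Xb [p Pp <-]] <-]] := fS y; exists p; split=> //.
  have XPb : addset X P b := addset_subl sP Xb.
  by rewrite fD ?(fK b XPb).2 ?add0r //; exact: PXP.
- by rewrite fK; [split=> [Xu|[]]|exact: PXP].
Qed.

Lemma quotient_iso_extend : quotient_iso (P `&` X) P S -> quotient_iso X (addset X P) S.
Proof.
move=> [g [gD gZ gS gK]]; have sXP := submod_addset sX sP.
have /choice[pr prP] : forall x, exists p, addset X P x -> P p /\ X (x - p).
  move=> x; have [[b Xb [p Pp <-]]|nx] := pselect (addset X P x); last by exists 0.
  by exists p => _; rewrite addrK; split.
have gpr x p : addset X P x -> P p -> X (x - p) -> g (pr x) = g p.
  move=> XPx Pp Xxp; have [Ppr Xxpr] := prP x XPx.
  have Pd : P (pr x - p) by exact: (submodB AN1 sP Ppr Pp).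
  have gd : g (pr x - p) = 0.
    apply/(gK _ Pd); split=> //.
    have <- : (x - p) - (x - pr x) = pr x - p by rewrite opprB addrC addrA subrK.
    exact: (submodB AN1 sX Xxp Xxpr).
  by rewrite -[pr x](subrK p) gD ?gd ?add0r.
exists (g \o pr); split=> [u w XPu XPw|a u aA XPu|y|u XPu] /=.
- have [[Pu Xu] [Pw Xw]] := (prP u XPu, prP w XPw).
  rewrite (gpr _ (pr u + pr w)) ?gD //; [exact: submodD sXP XPu XPw|exact: submodD sP Pu Pw|].
  by rewrite opprD addrACA; exact: submodD sX Xu Xw.
- have [Pu Xu] := prP u XPu.
  rewrite (gpr _ (a *: pr u)) ?gZ //; [exact: submodZ sXP aA XPu|exact: submodZ sP aA Pu|].
  by rewrite -scalerBr; exact: submodZ sX aA Xu.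
- have [p [Pp <-]] := gS y; have XPp := addset_subr sX Pp.
  by exists p; split=> //; apply: gpr; rewrite // subrr; exact: submod0 sX.
- have [Pu Xu] := prP u XPu; rewrite gK //; split=> [[_ Xp]|Xu']; last split=> //.
    by rewrite -(subrK (pr u) u); exact: submodD sX Xu Xp.
  have -> : pr u = u - (u - pr u) by rewrite opprB addrC subrK.
  exact: (submodB AN1 sX Xu' Xu).
Qed.

Lemma quotient_iso_second : quotient_iso X (addset X P) S <-> quotient_iso (P `&` X) P S.
Proof. by split; [exact: quotient_iso_restrict|exact: quotient_iso_extend]. Qed.

End SecondIsomorphism.

Lemma card_rel_bij (I J : finType) (R : I -> J -> Prop) (X : {set I}) (Y : {set J}) :
  (forall i, exists j, R i j) -> (forall j, exists i, R i j) ->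
  (forall i j j', R i j -> R i j' -> j = j') -> (forall i i' j, R i j -> R i' j -> i = i') ->
  (forall i j, R i j -> (i \in X) = (j \in Y)) -> #|X| = #|Y|.
Proof.
move=> Rtot Rsurj Rfun Rinj RXY; have /choice[f Rf] := Rtot.
have f_inj : injective f by move=> i i' fii'; apply: Rinj (Rf i) _; rewrite fii'.
suff -> : Y = f @: X by rewrite card_imset.
apply/setP => j; apply/idP/imsetP => [Yj|[i Xi ->]]; last by rewrite -(RXY _ _ (Rf i)).
have [i Rij] := Rsurj j; exists i; last exact: Rfun Rij (Rf i).
by rewrite (RXY _ _ Rij).
Qed.

Section JordanHolder.
Variables (F : fieldType) (L : algType F) (V : lmodType L) (A : {pred L}).
Hypothesis AN1 : -1 \in A.
Local Notation submodA := (submod (V := V) A).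

Section CompositionSeries.
Variables (n : nat) (W : nat -> set V).
Hypothesis cW : comp_series A n W.

Lemma comp_series_submod i : (i <= n)%N -> submodA (W i).
Proof. by case: cW => _ _ + _; apply. Qed.

Lemma comp_series_sub i : (i < n)%N -> W i `<=` W i.+1.
Proof. by case: cW => _ _ _ /[apply] -[]. Qed.

Lemma comp_series_strict i : (i < n)%N -> ~ W i.+1 `<=` W i.
Proof. by case: cW => _ _ _ /[apply] -[_ [v [Wv nWv]] _] /(_ v Wv). Qed.

Lemma comp_series_adjacent i U : (i < n)%N -> submodA U ->
  W i `<=` U -> U `<=` W i.+1 -> U = W i \/ U = W i.+1.
Proof.
move=> lt_in sU WU UW; case: cW => _ _ _ /(_ i lt_in)[_ _ /(_ U sU WU UW)].
by case=> eU; [left|right]; apply/seteqP; split=> v /eU.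
Qed.

Lemma comp_series_mono i k : (i <= k)%N -> (k <= n)%N -> W i `<=` W k.
Proof.
elim: k => [|k IHk]; first by rewrite leqn0 => /eqP-> _; exact: subset_refl.
rewrite leq_eqVlt => /predU1P[-> _|le_ik lt_kn]; first exact: subset_refl.
exact: subset_trans (IHk le_ik (ltnW lt_kn)) (comp_series_sub lt_kn).
Qed.

Lemma comp_series_bot : W 0%N `<=` [set 0].
Proof. by case: cW => W0 _ _ _ v /W0. Qed.

Lemma comp_series_top : W n = setT.
Proof. by case: cW => _ Wn _ _; apply/seteqP; split=> // v _; exact: Wn. Qed.

End CompositionSeries.

Definition zassenhaus_top (W W' : nat -> set V) i j := W i.+1 `&` W' j.+1.

Definition zassenhaus_bot (W W' : nat -> set V) i j :=
  addset (W i `&` W' j.+1) (W i.+1 `&` W' j).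

(* [crosses W W' i j]: j is the step at which W' first meets W i.+1 outside W i;
   this matches the i-th factor of W with the j-th factor of W'. *)
Definition crosses (W W' : nat -> set V) i j :=
  W i.+1 `&` W' j `<=` W i /\ ~ W i.+1 `&` W' j.+1 `<=` W i.

Lemma zassenhaus_topC W W' i j : zassenhaus_top W' W j i = zassenhaus_top W W' i j.
Proof. exact: setIC. Qed.

Lemma zassenhaus_botC W W' i j : zassenhaus_bot W' W j i = zassenhaus_bot W W' i j.
Proof. by rewrite /zassenhaus_bot addsetC setIC [W' j `&` _]setIC. Qed.

Section TwoSeries.
Variables (n m : nat) (W W' : nat -> set V).
Hypotheses (cW : comp_series A n W) (cW' : comp_series A m W').
Variables (i j : nat).
Hypotheses (lt_in : (i < n)%N) (lt_jm : (j < m)%N).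

Let sWi := comp_series_submod cW (ltnW lt_in).
Let sWi1 := comp_series_submod cW lt_in.
Let sW'j := comp_series_submod cW' (ltnW lt_jm).
Let sW'j1 := comp_series_submod cW' lt_jm.

Lemma zassenhaus_bot_eq : W i.+1 `&` W' j `<=` W i ->
  zassenhaus_bot W W' i j = zassenhaus_top W W' i j `&` W i.
Proof.
move=> WW'W; apply/seteqP; split; last first.
  by move=> x [[_ W'x] Wx]; apply: (addset_subl (submod_setI sWi1 sW'j)).
apply: addset_sub (submod_setI (submod_setI sWi1 sW'j1) sWi) _ _ => x [Wx W'x].
  by split=> //; split=> //; exact: (comp_series_sub cW lt_in Wx).
by split; [split=> //; exact: (comp_series_sub cW' lt_jm W'x)|exact: WW'W].
Qed.

Lemma crossesP : crosses W W' i j <->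
  ~ zassenhaus_top W W' i j `<=` zassenhaus_bot W W' i j.
Proof.
split=> [[WW'W PW] PQ|PQ].
  by apply: PW => x /PQ; rewrite zassenhaus_bot_eq // => -[].
split; last first.
  move=> PW; apply: PQ => p Pp; exists p; first by split; [exact: PW|case: Pp].
  by exists 0; [split; [exact: submod0 sWi1|exact: submod0 sW'j]|rewrite addr0].
have sZ := submod_addset sWi (submod_setI sWi1 sW'j).
have ZW : addset (W i) (W i.+1 `&` W' j) `<=` W i.+1.
  by apply: addset_sub sWi1 (comp_series_sub cW lt_in) (@subIsetl _ _ _).
case: (comp_series_adjacent cW lt_in sZ (addset_subl (submod_setI sWi1 sW'j)) ZW) => eZ.
  by rewrite -eZ; exact: addset_subr sWi.
case: PQ => p [Wp W'p]; have : addset (W i) (W i.+1 `&` W' j) p by rewrite eZ.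
case=> a Wa [b [Wb W'b] abp]; exists a; last by exists b.
split=> //; have -> : a = p - b by rewrite -abp addrK.
exact: (submodB AN1 sW'j1 W'p (comp_series_sub cW' lt_jm W'b)).
Qed.

Lemma crosses_addset : crosses W W' i j ->
  W i.+1 = addset (W i) (zassenhaus_top W W' i j).
Proof.
move=> [_ PW]; have sP := submod_setI sWi1 sW'j1.
have PWi1 : addset (W i) (zassenhaus_top W W' i j) `<=` W i.+1.
  exact: addset_sub sWi1 (comp_series_sub cW lt_in) (@subIsetl _ _ _).
case: (comp_series_adjacent cW lt_in (submod_addset sWi sP) (addset_subl sP) PWi1) => // eZ.
by case: PW; rewrite -[X in _ `<=` X]eZ; exact: addset_subr sWi.
Qed.

Lemma factor_iso_zassenhaus S : crosses W W' i j ->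
  factor_iso A W i S <-> quotient_iso A (zassenhaus_bot W W' i j) (zassenhaus_top W W' i j) S.
Proof.
move=> cross; rewrite /factor_iso -/(quotient_iso A (W i) (W i.+1) S).
rewrite {1}(crosses_addset cross) zassenhaus_bot_eq; last by case: cross.
exact: (quotient_iso_second AN1 S sWi (submod_setI sWi1 sW'j1)).
Qed.

End TwoSeries.

Lemma exists_crosses n m W W' i : comp_series A n W -> comp_series A m W' ->
  (i < n)%N -> exists2 j, (j < m)%N & crosses W W' i j.
Proof.
move=> cW cW' lt_in; pose g k := `[< W i.+1 `&` W' k `<=` W i >].
have gm : ~~ g m.
  by apply/asboolPn; rewrite (comp_series_top cW') setIT; exact: (comp_series_strict cW lt_in).
have [[|j] nk kmin] := ex_minnP (ex_intro (fun k => ~~ g k) m gm).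
  case/asboolPn: nk => v [_ /(comp_series_bot cW') ->].
  exact: submod0 (comp_series_submod cW (ltnW lt_in)).
exists j; first exact: kmin.
split; last exact/asboolPn.
by apply/asboolP; case: (boolP (g j)) => [/asboolP //|/kmin]; rewrite ltnn.
Qed.

Lemma crosses_unique m W W' i j j' : comp_series A m W' -> (j <= m)%N -> (j' <= m)%N ->
  crosses W W' i j -> crosses W W' i j' -> j = j'.
Proof.
move=> cW' le_jm le_j'm.
suff lt_F k k' : (k' <= m)%N -> crosses W W' i k -> crosses W W' i k' -> (k < k')%N -> False.
  move=> cj cj'; case: (ltngtP j j') => // [lt_jj'|lt_j'j].
    by case: (lt_F j j' le_j'm cj cj' lt_jj').
  by case: (lt_F j' j le_jm cj' cj lt_j'j).
move=> le_k'm [_ nk] [k'W _] lt_kk'; apply: nk => v [Wv W'v]; apply: k'W; split=> //.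
exact: (comp_series_mono cW' lt_kk' le_k'm W'v).
Qed.

Theorem jordan_holder n m (W W' : nat -> set V) (S : lmodType L) :
  comp_series A n W -> comp_series A m W' -> jh_count A n W S = jh_count A m W' S.
Proof.
move=> cW cW'; pose R (i : 'I_n) (j : 'I_m) := crosses W W' i j.
have RC i j : R i j <-> crosses W' W j i.
  rewrite /R (propext (crossesP cW cW' (ltn_ord i) (ltn_ord j))).
  by rewrite (propext (crossesP cW' cW (ltn_ord j) (ltn_ord i))) zassenhaus_topC zassenhaus_botC.
apply: (card_rel_bij (R := R)) => [i|j|i j j' ij ij'|i i' j /RC ji /RC i'j|i j ij].
- by have [j lt_jm ij] := exists_crosses cW cW' (ltn_ord i); exists (Ordinal lt_jm).
- by have [i lt_in ji] := exists_crosses cW' cW (ltn_ord j); exists (Ordinal lt_in); apply/RC.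
- by apply: val_inj; exact: crosses_unique cW' (ltnW (ltn_ord j)) (ltnW (ltn_ord j')) ij ij'.
- by apply: val_inj; exact: crosses_unique cW (ltnW (ltn_ord i)) (ltnW (ltn_ord i')) ji i'j.
rewrite !inE; apply: asbool_equiv_eq.
rewrite (propext (factor_iso_zassenhaus cW cW' (ltn_ord i) (ltn_ord j) S ij)).
have ji : crosses W' W j i by apply/RC.
rewrite (propext (factor_iso_zassenhaus cW' cW (ltn_ord j) (ltn_ord i) S ji)).
by rewrite zassenhaus_topC zassenhaus_botC.
Qed.

End JordanHolder.

(** * Restriction to the subalgebra *)

Section Restriction.
Variables (F : fieldType) (L : algType F) (Lam : {pred L}) (rep : L -> L).
Hypothesis repL : forall x, rep x \in Lam.

Section OneModule.
Variable V : lmodType L.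
Hypothesis repV : forall x (v : V), x *: v = rep x *: v.

Lemma submod_restrict (U : set V) : submod Lam U <-> submod predT U.
Proof.
split=> -[U0 UD UZ]; split=> // a u _ Uu; last exact: UZ.
by rewrite repV; exact: UZ.
Qed.

Lemma fin_gen_restrict : fin_gen V predT -> fin_gen V Lam.
Proof.
move=> [n [g gen]]; exists n, g => v; have [c [_ ->]] := gen v.
by exists (rep \o c); split=> [i|]; [exact: repL|apply: eq_bigr => i _; exact: repV].
Qed.

Lemma simple_mod_restrict : simple_mod V predT -> simple_mod V Lam.
Proof. by move=> [nz simp]; split=> // U /submod_restrict; exact: simp. Qed.

Lemma comp_series_restrict n (W : nat -> set V) :
  comp_series Lam n W -> comp_series predT n W.
Proof.
move=> [W0 Wn sW adjW]; split=> // [i /sW/submod_restrict //|i /adjW[WW Wv Wmax]].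
by split=> // U /submod_restrict; exact: Wmax.
Qed.

End OneModule.

Lemma jh_count_restrict (V S : lmodType L) n (W : nat -> set V) :
  (forall x (v : V), x *: v = rep x *: v) -> (forall x (s : S), x *: s = rep x *: s) ->
  jh_count Lam n W S = jh_count predT n W S.
Proof.
move=> repV repS; apply: eq_card => i; rewrite !inE; apply: asbool_equiv_eq.
split=> -[f [fD fZ fS fK]]; exists f; split=> // a u _ Wu; last exact: fZ.
by rewrite repV repS; exact: fZ.
Qed.

End Restriction.

(* x = Σ c t * ι t acts as Σ ω t *: c t, since ι t acts by the scalar ω t. *)
Lemma crossed_product_char_rep (F : fieldType) (L : algType F) (Lam : {pred L})
    (Zt : finGroupType) (iota : Zt -> L) (T : {set Zt}) (omega : Zt -> F) :
  subalgebra Lam -> crossed_product Lam iota T ->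
  exists2 rep : L -> L, (forall x, rep x \in Lam) &
    forall M : lmodType L, acts_by_char M iota omega -> forall x (v : M), x *: v = rep x *: v.
Proof.
move=> [L1 LD _ LZ] [_ [[/choice[c cP] _] _]].
have L0 : 0 \in Lam by rewrite -(scale0r 1); exact: LZ.
exists (fun x => \sum_(t in T) omega t *: c x t) => [x|M actM x v].
  by apply: (big_ind (fun y => y \in Lam)) => // t _; apply: LZ; case: (cP x).
rewrite {1}(cP x).2 !scaler_suml; apply: eq_bigr => t _.
by rewrite -scalerA actM scalerA mulr_algr.
Qed.

Theorem corollary5p5 (F : fieldType) (p : nat) (L : algType F) (Lam : {pred L})
    (Zt : finGroupType) (iota : Zt -> L) (T : {set Zt}) (omega : Zt -> F)
    (V sigma : lmodType L) :
  prime p -> p \in [pchar F] ->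
  artinian L -> subalgebra Lam ->
  central_subgroup iota -> coprime #|Zt| p ->
  crossed_product Lam iota T ->
  character omega ->
  fin_gen V predT -> acts_by_char V iota omega ->
  simple_mod sigma predT -> acts_by_char sigma iota omega ->
  [/\ fin_gen V Lam,
      simple_mod sigma Lam,
      (exists n W, comp_series (V := V) predT n W)
    & forall n W m W', comp_series (V := V) predT n W -> comp_series (V := V) Lam m W' ->
        jh_count predT n W sigma = jh_count Lam m W' sigma].
Proof.
move=> _ _ art subLam _ _ cpLam _ fgV actV simS actS.
have [rep repL repM] := crossed_product_char_rep omega subLam cpLam.
have [repV repS] := (repM V actV, repM sigma actS).
split; [exact: fin_gen_restrict|exact: simple_mod_restrict|exact: exists_comp_series|].
move=> n W m W' cW cW'; rewrite (jh_count_restrict repL _ _ repV repS).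
exact: (jordan_holder isT sigma cW (comp_series_restrict repL repV cW')).
Qed.
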